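(* Let $n\ge 2$. Every $n$-dimensional non-nilpotent cyclic Leibniz algebra over $\mathbb{C}$ is of type $k$ for one and only one $k\in\{2,\ldots,n\}$.
   Context: A (left) Leibniz algebra is a vector space with a bilinear product such that $x(yz)=(xy)z+y(xz)$ for all $x,y,z$. A cyclic Leibniz algebra is a Leibniz algebra generated by a single element. For an element $x$ set $x^1=x$ and $x^{j+1}=x\,x^j$. In an $n$-dimensional cyclic Leibniz algebra, a generator is an element $x$ such that $\{x,\ldots,x^n\}$ is a basis; for a generator $a$ one always has $aa^n=\alpha_2a^2+\cdots+\alpha_na^n$ for some scalars (no $a$-term). The algebra is called non-nilpotent if a generator $a$ satisfies $aa^n\neq 0$, i.e. $aa^n=\alpha_ka^k+\alpha_{k+1}a^{k+1}+\cdots+\alpha_na^n$ with $2\le k\le n$ and $\alpha_k\neq0$. An $n$-dimensional non-nilpotent cyclic Leibniz algebra is said to be of type $k$ if it has a generator $x$ with $$xx^n=x^k+\gamma_{k+1}x^{k+1}+\cdots+\gamma_nx^n$$ for some $(\gamma_{k+1},\ldots,\gamma_n)\in\mathbb{C}^{n-k}$. *)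

From HB Require Import structures.
From mathcomp Require Import all_boot all_order all_algebra.
From mathcomp Require Import complex.
From mathcomp Require Import Rstruct.
From Stdlib Require Rdefinitions.
Set Implicit Arguments. Unset Strict Implicit. Unset Printing Implicit Defensive.
Import Order.TTheory GRing.Theory Num.Theory.
Local Open Scope ring_scope.

Definition CC : fieldType := (Rdefinitions.R)[i].

Section Leibniz.
Variable V : vectType CC.
Variable mul : V -> V -> V.

Definition bilinear_prod : Prop :=
  (forall (a : CC) (x y z : V), mul (a *: x + y) z = a *: mul x z + mul y z) /\
  (forall (a : CC) (x y z : V), mul x (a *: y + z) = a *: mul x y + mul x z).

Definition leibniz_identity : Prop :=
  forall x y z : V, mul x (mul y z) = mul (mul x y) z + mul y (mul x z).

Definition is_leibniz_algebra : Prop := bilinear_prod /\ leibniz_identity.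

Definition mul_closed (U : {vspace V}) : Prop :=
  forall x y : V, x \in U -> y \in U -> mul x y \in U.

Definition is_cyclic : Prop :=
  exists a : V, forall U : {vspace V}, mul_closed U -> a \in U -> U = fullv.

(* x^1 = x, x^(j+1) = x x^j   (lpow x j is x^j for j >= 1) *)
Definition lpow (x : V) (j : nat) : V := iter j.-1 (mul x) x.

Definition is_generator (n : nat) (x : V) : Prop :=
  basis_of fullv [seq lpow x j | j <- iota 1 n].

Definition non_nilpotent (n : nat) : Prop :=
  exists a : V, is_generator n a /\ mul a (lpow a n) != 0.

Definition of_type (n k : nat) : Prop :=
  exists x : V, is_generator n x /\
    exists gamma : nat -> CC,
      mul x (lpow x n) = lpow x k + \sum_(k.+1 <= i < n.+1) gamma i *: lpow x i.

End Leibniz.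

From HB Require Import structures.
From mathcomp Require Import all_boot all_order all_algebra complex.
From mathcomp Require Import Rstruct.
From mathcomp Require Import zify.
Set Implicit Arguments. Unset Strict Implicit. Unset Printing Implicit Defensive.
Import Order.TTheory GRing.Theory Num.Theory.
Local Open Scope ring_scope.

(* By the Leibniz identity every square [x x], hence every power [x^j] with
   [j >= 2], is a left annihilator.  So two generators [x], [y] agree up to a
   nonzero factor modulo span(x^2, ..., x^n), and their left multiplications
   are proportional: [L_y = c L_x], where [L_x z = x z].  For a generator [x] of type [k], [L_x]
   maps span(x^j, ..., x^n) into span(x^(j+1), ..., x^n) for [j < k] and maps
   span(x^k, ..., x^n) onto itself; hence the image of [L_x^n] is
   span(x^k, ..., x^n), of dimension [n + 1 - k], and since it is the image of
   [L_y^n] as well, [k] does not depend on the generator.  For existence,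
   [a a^n] lies in span(a^2, ..., a^n) because [a^(n+1) a = 0]; its lowest
   nonzero coefficient [b a^k] is normalised to [a^k] by replacing [a] with
   [c a], where [c^(n+1-k) = b^-1]. *)

Lemma exists_rootCC (m : nat) (z : CC) : (0 < m)%N -> exists c : CC, c ^+ m = z.
Proof. by move=> m_gt0; exists (m.-root (z : Rdefinitions.R[i])); exact: rootCK. Qed.

Lemma memv_span_iota (K : fieldType) (W : vectType K) (f : nat -> W) m l w :
  w \in <<[seq f i | i <- iota m l]>>%VS ->
  exists c : nat -> K, w = \sum_(m <= i < m + l) c i *: f i.
Proof.
elim: l m w => [|l IHl] m w.
  rewrite span_nil memv0 => /eqP ->; exists (fun _ => 0).
  by rewrite addn0 big_geq.
rewrite /= span_cons => /memv_addP [_ /vlineP [b ->] [v /IHl [c ->] ->]].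
exists (fun i => if i == m then b else c i).
rewrite (@big_ltn _ _ _ m) ?eqxx; last by lia.
congr (_ + _); rewrite addSnnS; apply: eq_big_nat => i /andP [lt_mi _].
by rewrite ifN //; apply/eqP; lia.
Qed.

Lemma sum_leading_term (K : fieldType) (W : lmodType K) (f : nat -> W)
    (c : nat -> K) m n :
  \sum_(m <= i < n) c i *: f i != 0 ->
  exists2 k, (m <= k < n)%N & c k != 0 /\
    \sum_(m <= i < n) c i *: f i = c k *: f k + \sum_(k.+1 <= i < n) c i *: f i.
Proof.
move=> sum_neq0.
pose P k := (m <= k < n)%N && (c k != 0).
have exP : exists k, P k.
  have [/existsP [k /andP [le_mk ck]] | none] :=
    boolP [exists k : 'I_n, (m <= k)%N && (c k != 0)].
    by exists (val k); rewrite /P le_mk ltn_ord.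
  case/negP: sum_neq0; rewrite big_nat big1 // => i /andP [le_mi lt_in].
  move/existsPn: none => /(_ (Ordinal lt_in)) /=.
  by rewrite le_mi /= negbK => /eqP ->; rewrite scale0r.
case: (ex_minnP exP) => k /andP [/andP [le_mk lt_kn] ck] kmin.
exists k; first by rewrite le_mk.
split=> //; rewrite (@big_cat_nat _ _ _ k) ?(ltnW lt_kn) //=.
have -> : \sum_(m <= i < k) c i *: f i = 0.
  rewrite big_nat big1 // => i /andP [le_mi lt_ik].
  have : ~~ P i by apply: contraTN lt_ik => /kmin; rewrite -leqNgt.
  by rewrite /P le_mi (ltn_trans lt_ik lt_kn) negbK => /eqP ->; rewrite scale0r.
by rewrite add0r big_ltn.
Qed.

Section LeibnizAlgebra.
Variables (V : vectType CC) (mul : V -> V -> V).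
Hypothesis mul_bilinear : bilinear_prod mul.
Hypothesis mul_leibniz : leibniz_identity mul.

Lemma prod0l z : mul 0 z = 0.
Proof.
have := mul_bilinear.1 1 0 0 z; rewrite scaler0 addr0 scale1r => h.
by apply/(addrI (mul 0 z)); rewrite addr0 -h.
Qed.

Lemma prod0r z : mul z 0 = 0.
Proof.
have := mul_bilinear.2 1 z 0 0; rewrite scaler0 addr0 scale1r => h.
by apply/(addrI (mul z 0)); rewrite addr0 -h.
Qed.

Lemma prodDl x y z : mul (x + y) z = mul x z + mul y z.
Proof. by have := mul_bilinear.1 1 x y z; rewrite !scale1r. Qed.

Lemma prodDr x y z : mul z (x + y) = mul z x + mul z y.
Proof. by have := mul_bilinear.2 1 z x y; rewrite !scale1r. Qed.

Lemma prodZl a x z : mul (a *: x) z = a *: mul x z.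
Proof. by have := mul_bilinear.1 a x 0 z; rewrite addr0 prod0l addr0. Qed.

Lemma prodZr a x z : mul z (a *: x) = a *: mul z x.
Proof. by have := mul_bilinear.2 a z x 0; rewrite addr0 prod0r addr0. Qed.

Lemma prodBr x y z : mul z (x - y) = mul z x - mul z y.
Proof. by rewrite prodDr -scaleN1r prodZr scaleN1r. Qed.

Lemma prod_suml (I : Type) (r : seq I) (P : pred I) (F : I -> V) z :
  mul (\sum_(i <- r | P i) F i) z = \sum_(i <- r | P i) mul (F i) z.
Proof. exact: (big_morph (mul^~ z) (fun x y => prodDl x y z) (prod0l z)). Qed.

Lemma prod_sumr (I : Type) (r : seq I) (P : pred I) (F : I -> V) z :
  mul z (\sum_(i <- r | P i) F i) = \sum_(i <- r | P i) mul z (F i).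
Proof. exact: (big_morph (mul z) (fun x y => prodDr x y z) (prod0r z)). Qed.

Lemma lpowS x j : (0 < j)%N -> lpow mul x j.+1 = mul x (lpow mul x j).
Proof. by case: j. Qed.

Lemma lpow_prod0 x j z : (2 <= j)%N -> mul (lpow mul x j) z = 0.
Proof.
case: j => [|[|j]] // _; elim: j z => [|j IHj] z.
  have := mul_leibniz x x z; rewrite /lpow /= => h.
  by apply/(addIr (mul x (mul x z))); rewrite add0r -h.
have := mul_leibniz x (lpow mul x j.+2) z.
by rewrite !IHj prod0r addr0 -lpowS.
Qed.

Lemma lpowZ c x j : (0 < j)%N -> lpow mul (c *: x) j = c ^+ j *: lpow mul x j.
Proof.
case: j => // j _; elim: j => [|j IHj]; first by rewrite expr1.
by rewrite lpowS // IHj prodZl prodZr scalerA -exprS.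
Qed.

Definition powspan x m n : {vspace V} :=
  <<[seq lpow mul x i | i <- iota m (n.+1 - m)]>>%VS.

Lemma mem_powspan x m n i : (m <= i <= n)%N -> lpow mul x i \in powspan x m n.
Proof. by move=> hi; apply/memv_span/map_f; rewrite mem_iota; lia. Qed.

Lemma sum_mem_powspan x m m' n (g : nat -> CC) : (m <= m')%N ->
  \sum_(m' <= i < n.+1) g i *: lpow mul x i \in powspan x m n.
Proof.
move=> le_mm'; rewrite big_nat; apply: memv_suml => i hi.
by apply/memvZ/mem_powspan; lia.
Qed.

Lemma powspanP x m n v : (m <= n.+1)%N -> v \in powspan x m n ->
  exists g : nat -> CC, v = \sum_(m <= i < n.+1) g i *: lpow mul x i.
Proof. by move=> hm /memv_span_iota; rewrite subnKC. Qed.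

Lemma powspan_cons x m n : (m <= n)%N ->
  powspan x m n = (<[lpow mul x m]> + powspan x m.+1 n)%VS.
Proof. by move=> hm; rewrite /powspan -span_cons subSS subSn. Qed.

Lemma powspan1 x n : is_generator mul n x -> powspan x 1 n = fullv.
Proof. by case/andP => /eqP <- _; rewrite /powspan subSS subn0. Qed.

Lemma dim_powspan x m n : is_generator mul n x -> (1 <= m <= n.+1)%N ->
  \dim (powspan x m n) = (n.+1 - m)%N.
Proof.
case/andP => _ free_x hm.
have iota_split : iota 1 n = iota 1 m.-1 ++ iota m (n.+1 - m).
  have m_eq : m = (1 + m.-1)%N by lia.
  by rewrite {2}m_eq -iotaD; congr iota; lia.
move: free_x; rewrite iota_split map_cat => /catr_free /eqP.
by rewrite size_map size_iota.
Qed.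

Lemma powspan2_prod0 x n w z : w \in powspan x 2 n -> mul w z = 0.
Proof.
case/memv_span_iota => g ->; rewrite prod_suml big_nat big1 // => i /andP [hi _].
by rewrite prodZl lpow_prod0 // scaler0.
Qed.

Lemma generator_lpow_neq0 x n i : is_generator mul n x -> (1 <= i <= n)%N ->
  lpow mul x i != 0.
Proof.
by case/andP => _ free_x hi; apply: (free_not0 free_x); apply: map_f; rewrite mem_iota; lia.
Qed.

Lemma generator_decomp x n y : is_generator mul n x -> (0 < n)%N ->
  exists c : CC, exists2 w, w \in powspan x 2 n & y = c *: x + w.
Proof.
move=> gx n_gt0; have : y \in powspan x 1 n by rewrite powspan1 ?memvf.
rewrite powspan_cons // => /memv_addP [_ /vlineP [c ->] [w hw ->]].
by exists c, w.
Qed.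

Lemma generator_prod_scale x y n :
    is_generator mul n x -> is_generator mul n y -> (2 <= n)%N ->
  exists2 c : CC, c != 0 & forall z, mul y z = c *: mul x z.
Proof.
move=> gx gy n_ge2; have [c [w hw ey]] := generator_decomp y gx (ltnW n_ge2).
have prod_y z : mul y z = c *: mul x z.
  by rewrite ey prodDl prodZl (powspan2_prod0 z hw) addr0.
exists c => //; apply/eqP => c0.
have := generator_lpow_neq0 gy (_ : 1 <= 2 <= n)%N.
by rewrite n_ge2 /lpow /= prod_y c0 scale0r eqxx => /(_ isT).
Qed.

Lemma is_generatorZ c x n :
  c != 0 -> is_generator mul n x -> is_generator mul n (c *: x).
Proof.
move=> c0 gx; rewrite /is_generator basisEdim size_map size_iota.
case/andP: gx => /eqP <- /eqP ->; rewrite size_map size_iota leqnn andbT.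
apply/span_subvP => u /mapP [i hi ->]; move: hi; rewrite mem_iota => hi.
rewrite -[lpow mul x i](scalerK (expf_neq0 i c0)) -lpowZ; last by lia.
by apply/memvZ/memv_span/map_f; rewrite mem_iota.
Qed.

Lemma lpow_prod_mem_powspan2 a n : is_generator mul n a -> (2 <= n)%N ->
  mul a (lpow mul a n) \in powspan a 2 n.
Proof.
move=> ga n_ge2; have n_gt0 := ltnW n_ge2.
have [c [w hw ev]] := generator_decomp (mul a (lpow mul a n)) ga n_gt0.
have c0 : c = 0.
  have : mul (mul a (lpow mul a n)) a = 0 by rewrite -lpowS ?lpow_prod0.
  rewrite ev prodDl prodZl (powspan2_prod0 a hw) addr0 => /eqP.
  rewrite scaler_eq0 (negbTE (generator_lpow_neq0 ga (_ : 1 <= 2 <= n)%N)) ?n_ge2 //.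
  by rewrite orbF => /eqP.
by rewrite ev c0 scale0r add0r.
Qed.

Lemma of_type_leading_term a n k (b : CC) (g : nat -> CC) :
    is_generator mul n a -> (2 <= k <= n)%N -> b != 0 ->
    mul a (lpow mul a n) = b *: lpow mul a k + \sum_(k.+1 <= i < n.+1) g i *: lpow mul a i ->
  of_type mul n k.
Proof.
move=> ga hk b0 ev.
have [c c_root] : exists c : CC, c ^+ (n.+1 - k) = b^-1.
  by apply: exists_rootCC; lia.
have c0 : c != 0.
  apply/eqP => c_eq0; move: c_root; rewrite c_eq0 expr0n eqn0Ngt subn_gt0 ltnS.
  rewrite (_ : k <= n)%N /=; last by lia.
  by move/esym/eqP; rewrite invr_eq0 (negbTE b0).
exists (c *: a); split; first exact: is_generatorZ.
exists (fun i => c ^+ n.+1 * g i / c ^+ i).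
rewrite prodZl !lpowZ ?prodZr; try lia.
rewrite scalerA -exprS ev scalerDr scalerA; congr (_ + _).
  rewrite (_ : n.+1 = k + (n.+1 - k))%N; last by lia.
  by rewrite exprD -mulrA c_root mulVf ?mulr1.
rewrite scaler_sumr; apply: eq_big_nat => i hi.
by rewrite lpowZ ?scalerA ?mulfVK ?expf_neq0 //; lia.
Qed.

Section TypeGenerator.
Variables (n k : nat) (x : V) (gam : nat -> CC).
Hypothesis gx : is_generator mul n x.
Hypothesis hk : (2 <= k <= n)%N.
Hypothesis x_type :
  mul x (lpow mul x n) = lpow mul x k + \sum_(k.+1 <= i < n.+1) gam i *: lpow mul x i.

Lemma prod_mem_powspan j u : (1 <= j <= k)%N -> u \in powspan x j n ->
  mul x u \in powspan x (minn j.+1 k) n.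
Proof.
move=> hj /powspanP [|g ->]; first by lia.
rewrite prod_sumr big_nat; apply: memv_suml => i hi; rewrite prodZr; apply: memvZ.
have [-> | ne_in] := eqVneq i n.
  by rewrite x_type; apply: memvD; [apply: mem_powspan | apply: sum_mem_powspan]; lia.
by rewrite -lpowS; [apply: mem_powspan | ]; lia.
Qed.

Lemma iter_prod_mem_powspan t w : iter t (mul x) w \in powspan x (minn t.+1 k) n.
Proof.
elim: t => [|t IHt] /=.
  by rewrite (_ : minn 1 k = 1)%N ?powspan1 ?memvf //; lia.
have := prod_mem_powspan _ IHt.
by rewrite (_ : minn (minn t.+1 k).+1 k = minn t.+2 k); [apply; lia | lia].
Qed.

(* [x^k] has the preimage [x^n - sum_(i > k) gam_i x^(i-1)] under [L_x]. *)
Lemma powspan_prod_image v : v \in powspan x k n ->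
  exists2 u, u \in powspan x k n & v = mul x u.
Proof.
move=> /powspanP [|g ->]; first by lia.
pose pre i := if i == k
  then lpow mul x n - \sum_(k.+1 <= j < n.+1) gam j *: lpow mul x j.-1
  else lpow mul x i.-1.
exists (\sum_(k <= i < n.+1) g i *: pre i).
  rewrite big_nat; apply: memv_suml => i hi; apply: memvZ; rewrite /pre.
  case: eqP => [_|ne_ik]; last by apply: mem_powspan; lia.
  apply: memvB; first by apply: mem_powspan; lia.
  by rewrite big_nat; apply: memv_suml => j hj; apply/memvZ/mem_powspan; lia.
rewrite prod_sumr; apply: eq_big_nat => i hi; rewrite prodZr /pre.
case: eqP => [->|ne_ik]; last by rewrite -lpowS; [congr (_ *: lpow _ _ _) | ]; lia.
rewrite prodBr x_type prod_sumr -addrA [X in _ + X](_ : _ = 0) ?addr0 //.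
apply/eqP; rewrite subr_eq0; apply/eqP/eq_big_nat => j hj.
by rewrite prodZr -lpowS; [congr (_ *: lpow _ _ _) | ]; lia.
Qed.

Lemma powspan_iter_prod t v : v \in powspan x k n ->
  exists w, v = iter t (mul x) w.
Proof.
elim: t v => [|t IHt] v hv; first by exists v.
have [u hu ->] := powspan_prod_image hv; have [w ->] := IHt u hu.
by exists w.
Qed.

End TypeGenerator.

Lemma of_type_le n k k' : (2 <= n)%N -> (2 <= k <= n)%N -> (2 <= k' <= n)%N ->
  of_type mul n k -> of_type mul n k' -> (k' <= k)%N.
Proof.
move=> n_ge2 hk hk' [x [gx [g x_type]]] [y [gy [g' y_type]]].
have [c c0 prod_xy] := generator_prod_scale gy gx n_ge2.
have iter_xy t w : iter t (mul x) w = c ^+ t *: iter t (mul y) w.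
  elim: t => [|t IHt] /=; first by rewrite scale1r.
  by rewrite IHt prod_xy prodZr scalerA exprS.
have sub : (powspan x k n <= powspan y k' n)%VS.
  apply/subvP => v /(powspan_iter_prod hk x_type n) [w ->].
  rewrite iter_xy; apply: memvZ.
  have := iter_prod_mem_powspan gy hk' y_type n w.
  by rewrite (_ : minn n.+1 k' = k'); last by lia.
by have := dimvS sub; rewrite !dim_powspan //; lia.
Qed.

Lemma non_nilpotent_of_type n : (2 <= n)%N -> non_nilpotent mul n ->
  exists2 k, (2 <= k <= n)%N & of_type mul n k.
Proof.
move=> n_ge2 [a [ga v_neq0]].
have /powspanP [|g v_eq] := lpow_prod_mem_powspan2 ga n_ge2; first by lia.
rewrite v_eq in v_neq0.
have [k hk [gk0 lead]] := sum_leading_term v_neq0.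
exists k; first by lia.
by apply: (of_type_leading_term ga _ gk0); [lia | rewrite v_eq lead].
Qed.

End LeibnizAlgebra.

Theorem lemma3p3 (n : nat) (V : vectType CC) (mul : V -> V -> V) :
  (2 <= n)%N ->
  \dim (fullv : {vspace V}) = n ->
  is_leibniz_algebra mul ->
  is_cyclic mul ->
  non_nilpotent mul n ->
  exists! k : nat, (2 <= k <= n)%N /\ of_type mul n k.
Proof.
(* A generator already spans a space of dimension [n]. *)
move=> n_ge2 _ [mul_bilinear mul_leibniz] _ non_nil.
have [k hk k_type] := non_nilpotent_of_type mul_bilinear mul_leibniz n_ge2 non_nil.
exists k; split=> // k' [hk' k'_type].
have le_k'k := of_type_le mul_bilinear mul_leibniz n_ge2 hk hk' k_type k'_type.
have le_kk' := of_type_le mul_bilinear mul_leibniz n_ge2 hk' hk k'_type k_type.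
by apply/eqP; rewrite eqn_leq le_kk' le_k'k.
Qed.
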